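(* Let $G$ be a pro-group and $\varphi\colon G\to G$ an automorphism in $\operatorname{Pro}(\mathbf{Grp})$ with $\varphi^n=\mathrm{id}_G$ for some integer $n\ge1$. Then there exist a directed set $J$, an inverse system of groups $(G'_j)_{j\in J}$ and automorphisms $\varphi_j$ of $G'_j$ with $\varphi_j^n=\mathrm{id}$ commuting with the transition maps, and an isomorphism $G\cong G'$ in $\operatorname{Pro}(\mathbf{Grp})$ carrying $\varphi$ to the level automorphism $(\varphi_j)_j$.
   Context: For a category $\mathcal C$, $\operatorname{Pro}(\mathcal C)$ is its pro-completion: objects are inverse systems, i.e. functors $X\colon \mathcal I_X^{op}\to\mathcal C$ with $\mathcal I_X$ a small filtered category, and $\operatorname{Hom}_{\operatorname{Pro}(\mathcal C)}(X,Y)=\varprojlim_{j\in\mathcal I_Y}\varinjlim_{i\in\mathcal I_X}\mathcal C(X_i,Y_j)$. A pro-group is an object of $\operatorname{Pro}(\mathbf{Grp})$. *)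

From Stdlib Require Import ProofIrrelevance.

Set Implicit Arguments.
Unset Strict Implicit.

Record Grp := {
  gcar :> Type;
  gmul : gcar -> gcar -> gcar;
  gone : gcar;
  ginv : gcar -> gcar;
  gassoc : forall x y z, gmul x (gmul y z) = gmul (gmul x y) z;
  gmul1l : forall x, gmul gone x = x;
  gmul1r : forall x, gmul x gone = x;
  gmulVl : forall x, gmul (ginv x) x = gone;
  gmulVr : forall x, gmul x (ginv x) = gone }.

Record GHom (A B : Grp) := {
  hfun :> A -> B;
  hmul : forall x y, hfun (gmul x y) = gmul (hfun x) (hfun y) }.

Definition ghom_id (A : Grp) : GHom A A :=
  {| hfun := fun x => x; hmul := fun x y => eq_refl |}.

Definition ghom_comp (A B C : Grp) (g : GHom B C) (f : GHom A B) : GHom A C.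
Proof.
  refine {| hfun := fun x => g (f x) |}.
  intros x y; rewrite (hmul f), (hmul g); reflexivity.
Defined.

Fixpoint fiter {T : Type} (n : nat) (f : T -> T) (x : T) : T :=
  match n with O => x | S m => f (fiter m f x) end.

Record FiltCat := {
  ob :> Type;
  hom : ob -> ob -> Type;
  idm : forall a, hom a a;
  cmp : forall a b c, hom b c -> hom a b -> hom a c;
  cmp_idl : forall a b (f : hom a b), cmp (idm b) f = f;
  cmp_idr : forall a b (f : hom a b), cmp f (idm a) = f;
  cmp_assoc : forall a b c d (h : hom c d) (g : hom b c) (f : hom a b),
      cmp h (cmp g f) = cmp (cmp h g) f;
  filt_nonempty : inhabited ob;
  filt_cocone : forall a b, exists c (u : hom a c) (v : hom b c), True;
  filt_coeq : forall a b (u v : hom a b), exists c (w : hom b c), cmp w u = cmp w v }.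
Arguments cmp {f0 a b c} : rename.
Arguments idm {f0} : rename.

Record ProGrp := {
  pidx : FiltCat;
  pobj :> pidx -> Grp;
  pmap : forall i k : pidx, hom i k -> GHom (pobj k) (pobj i);
  pmap_id : forall i x, pmap (idm i) x = x;
  pmap_comp : forall (i k l : pidx) (u : hom i k) (v : hom k l) x,
      pmap (cmp v u) x = pmap u (pmap v x) }.
Arguments pmap {p i k}.

(* Equality in colim_{i in I_X} Grp(X_i, Y_j) of the germs (i,f) and (i',f'). *)
Definition germ_eq (X Y : ProGrp) (j : pidx Y) (i : pidx X) (f : GHom (X i) (Y j))
    (i' : pidx X) (f' : GHom (X i') (Y j)) : Prop :=
  exists (k : pidx X) (u : hom i k) (u' : hom i' k),
    forall x : X k, f (pmap u x) = f' (pmap u' x).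

(* A family of representatives j |-> (src j, f_j : X_{src j} -> Y_j); it is a
   morphism of Pro(Grp) (element of lim_j colim_i Grp(X_i,Y_j)) iff compatible. *)
Record PreHom (X Y : ProGrp) := {
  src : pidx Y -> pidx X;
  comp_at :> forall j : pidx Y, GHom (X (src j)) (Y j) }.

Definition is_prohom (X Y : ProGrp) (f : PreHom X Y) : Prop :=
  forall (j j' : pidx Y) (v : hom j j'),
    germ_eq (ghom_comp (pmap v) (f j')) (f j).

Definition pro_eq (X Y : ProGrp) (f g : PreHom X Y) : Prop :=
  forall j : pidx Y, germ_eq (f j) (g j).

Definition pro_id (X : ProGrp) : PreHom X X :=
  {| src := fun j => j; comp_at := fun j => ghom_id (X j) |}.

Definition pro_comp (X Y Z : ProGrp) (g : PreHom Y Z) (f : PreHom X Y) : PreHom X Z :=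
  {| src := fun k => src f (src g k);
     comp_at := fun k => ghom_comp (g k) (f (src g k)) |}.

Fixpoint pro_iter (X : ProGrp) (n : nat) (f : PreHom X X) : PreHom X X :=
  match n with O => pro_id X | S m => pro_comp f (pro_iter m f) end.

Definition pro_iso (X Y : ProGrp) (f : PreHom X Y) : Prop :=
  is_prohom f /\ exists g : PreHom Y X, is_prohom g /\
    pro_eq (pro_comp g f) (pro_id X) /\ pro_eq (pro_comp f g) (pro_id Y).

Record DirectedSet := {
  dcar :> Type;
  dle : dcar -> dcar -> Prop;
  dle_refl : forall a, dle a a;
  dle_trans : forall a b c, dle a b -> dle b c -> dle a c;
  d_nonempty : inhabited dcar;
  d_directed : forall a b, exists c, dle a c /\ dle b c }.

Definition dirCat (J : DirectedSet) : FiltCat.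
Proof.
  refine {| ob := dcar J; hom := @dle J; idm := @dle_refl J;
            cmp := fun a b c (g : @dle J b c) (f : @dle J a b) => dle_trans f g |}.
  - intros; apply proof_irrelevance.
  - intros; apply proof_irrelevance.
  - intros; apply proof_irrelevance.
  - exact (d_nonempty J).
  - intros a b; destruct (d_directed a b) as [c [h1 h2]]; exists c, h1, h2; exact I.
  - intros a b u v; exists b, (dle_refl b); apply proof_irrelevance.
Defined.

Record InvSys (J : DirectedSet) := {
  iobj :> J -> Grp;
  itrans : forall i k : J, @dle J i k -> GHom (iobj k) (iobj i);
  itrans_id : forall i (h : @dle J i i) x, itrans h x = x;
  itrans_comp : forall i k l (h1 : @dle J i k) (h2 : @dle J k l) (h3 : @dle J i l) x,
      itrans h3 x = itrans h1 (itrans h2 x) }.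
Arguments itrans {J i0 i k}.

Definition pro_of_sys (J : DirectedSet) (S : InvSys J) : ProGrp.
Proof.
  refine {| pidx := dirCat J; pobj := fun j : J => S j;
            pmap := fun i k (h : @dle J i k) => itrans h |}.
  - intros; apply itrans_id.
  - intros; apply itrans_comp.
Defined.

Definition level_hom (J : DirectedSet) (S : InvSys J) (phi : forall j : J, GHom (S j) (S j))
  : PreHom (pro_of_sys S) (pro_of_sys S) :=
  @Build_PreHom (pro_of_sys S) (pro_of_sys S) (fun j => j) phi.

From Stdlib Require Import ProofIrrelevance Classical ClassicalEpsilon FunctionalExtensionality.
From Stdlib Require Import List Lia PeanoNat Eqdep.
Import ListNotations.

(* The index category [I] of [G] is first replaced by a cofinal directed set: finite
   diagrams in [I] with a terminal vertex, ordered by extension.  Over it the iterates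
   [phi^k] are level maps up to eventual equality, and [phi^n = id] yields
   [phi^t ~ phi^(t mod n)].  At an index with stage [a], the new group is the subgroup of
   sequences [nat -> G_a] generated by the shifted orbits [(phi^(j mod n) x)_j]; shifting
   sequences is a level automorphism of order [n].  Sending [x] to its orbit is a
   pro-isomorphism (its inverse evaluates at [0]), and it carries [phi] to the shift
   because the orbit of [phi x] is the shifted orbit of [x]. *)

(** * Groups of sequences and generated subgroups *)

Lemma ghom1 (A B : Grp) (f : GHom A B) : f (gone A) = gone B.
Proof.
  assert (H : gmul (f (gone A)) (f (gone A)) = gmul (f (gone A)) (gone B)).
  { rewrite <- hmul, gmul1l, gmul1r. reflexivity. }
  apply (f_equal (gmul (ginv (f (gone A))))) in H.
  rewrite !gassoc, gmulVl, !gmul1l in H. exact H.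
Qed.

Lemma ghomV (A B : Grp) (f : GHom A B) (x : A) : f (ginv x) = ginv (f x).
Proof.
  assert (H : gmul (f (ginv x)) (f x) = gmul (ginv (f x)) (f x)).
  { rewrite <- hmul, !gmulVl. apply ghom1. }
  apply (f_equal (fun z => gmul z (ginv (f x)))) in H.
  rewrite <- !gassoc, gmulVr, !gmul1r in H. exact H.
Qed.

Definition seq_grp (A : Grp) : Grp.
Proof.
  refine {| gcar := nat -> A; gmul := fun y z j => gmul (y j) (z j);
            gone := fun _ => gone A; ginv := fun y j => ginv (y j) |};
  intros; apply functional_extensionality; intro;
  auto using gassoc, gmul1l, gmul1r, gmulVl, gmulVr.
Defined.

Definition seq_map (A B : Grp) (f : GHom A B) : GHom (seq_grp A) (seq_grp B).
Proof.
  refine {| hfun := fun (y : seq_grp A) => (fun j => f (y j)) : seq_grp B |}.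
  intros; apply functional_extensionality; intro; apply hmul.
Defined.

Definition seq_shift (A : Grp) (k : nat) : GHom (seq_grp A) (seq_grp A) :=
  {| hfun := fun (y : seq_grp A) => (fun j => y (j + k)) : seq_grp A;
     hmul := fun _ _ => eq_refl |}.

Definition seq_eval (A : Grp) (j : nat) : GHom (seq_grp A) A :=
  {| hfun := fun (y : seq_grp A) => y j; hmul := fun _ _ => eq_refl |}.

Inductive gen {H : Grp} (P : H -> Prop) : H -> Prop :=
| gen_base y : P y -> gen P y
| gen_one : gen P (gone H)
| gen_mul y z : gen P y -> gen P z -> gen P (gmul y z)
| gen_inv y : gen P y -> gen P (ginv y).

Definition subgrp_gen (H : Grp) (P : H -> Prop) : Grp.
Proof.
  refine {| gcar := {y : H | gen P y};
            gmul := fun y z => exist _ (gmul (proj1_sig y) (proj1_sig z))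
                                      (gen_mul P _ _ (proj2_sig y) (proj2_sig z));
            gone := exist _ (gone H) (gen_one P);
            ginv := fun y => exist _ (ginv (proj1_sig y)) (gen_inv P _ (proj2_sig y)) |};
  intros; apply eq_sig_hprop; try (intros; apply proof_irrelevance); simpl;
  auto using gassoc, gmul1l, gmul1r, gmulVl, gmulVr.
Defined.

Lemma subgrp_val_inj (H : Grp) (P : H -> Prop) (y z : subgrp_gen H P) :
  proj1_sig y = proj1_sig z -> y = z.
Proof. apply eq_sig_hprop. intros; apply proof_irrelevance. Qed.

Lemma gen_ghom (H K : Grp) (f : GHom H K) (P : H -> Prop) (P' : K -> Prop) :
  (forall y, P y -> gen P' (f y)) -> forall y, gen P y -> gen P' (f y).
Proof.
  intros HP y Hy; induction Hy.
  - auto.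
  - rewrite ghom1. apply gen_one.
  - rewrite hmul. apply gen_mul; auto.
  - rewrite ghomV. apply gen_inv; auto.
Qed.

Definition subgrp_map (H K : Grp) (f : GHom H K) (P : H -> Prop) (P' : K -> Prop)
  (HP : forall y, P y -> gen P' (f y)) : GHom (subgrp_gen H P) (subgrp_gen K P').
Proof.
  refine {| hfun := fun y : subgrp_gen H P =>
              (exist _ (f (proj1_sig y)) (gen_ghom H K f P P' HP _ (proj2_sig y))
                 : subgrp_gen K P') |}.
  intros. apply subgrp_val_inj. apply hmul.
Defined.

Lemma ghom_eq_on_gen (H K : Grp) (P : H -> Prop) (f g : GHom H K) :
  (forall y, P y -> f y = g y) -> forall y, gen P y -> f y = g y.
Proof.
  intros HP y Hy; induction Hy.
  - auto.
  - rewrite !ghom1. reflexivity.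
  - rewrite !hmul. congruence.
  - rewrite !ghomV. congruence.
Qed.


(** * A cofinal directed set of finite diagrams *)

Section CofinalDirectedSet.
Context {I : FiltCat}.

Definition tarrow (v : I) := {a : I & (nat * hom a v)%type}.

Definition tagged {v : I} (a : I) (m : nat) (f : hom a v) : tarrow v := existT _ a (m, f).

Definition tarrow_post {v w : I} (c : hom v w) (e : tarrow v) : tarrow w :=
  existT _ (projT1 e) (fst (projT2 e), cmp c (snd (projT2 e))).

Lemma tagged_inj {v : I} (a : I) m m' (f f' : hom a v) :
  tagged a m f = tagged a m' f' -> m = m' /\ f = f'.
Proof. intro H. apply inj_pair2 in H. inversion H. auto. Qed.

Lemma tagged_tag_eq {v : I} (a a' : I) m m' (f : hom a v) (f' : hom a' v) :
  tagged a m f = tagged a' m' f' -> m = m'.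
Proof. intro H. exact (f_equal (fun e : tarrow v => fst (projT2 e)) H). Qed.

Lemma in_map_post {v w : I} (c : hom v w) (L : list (tarrow v)) a m (f : hom a w) :
  In (tagged a m f) (map (tarrow_post c) L) -> exists f1, In (tagged a m f1) L /\ f = cmp c f1.
Proof.
  intro H. apply in_map_iff in H. destruct H as [[a1 [m1 f1]] [He Hin]].
  assert (a1 = a) by exact (f_equal (@projT1 _ _) He). subst a1.
  apply tagged_inj in He. destruct He; subst. eauto.
Qed.

(* A [diag] is a finite diagram in [I] with terminal vertex [apex]: the vertices are the
   tagged objects [(a, m)] listed in [arrows], each with its unique arrow to the apex.
   Tags allow an object of [I] to occur as several vertices. *)
Record diag := {
  apex : I;
  apex_tag : nat;
  arrows : list (tarrow apex);
  apex_in : In (tagged apex apex_tag (idm apex)) arrows;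
  arrows_fun : forall a m (f g : hom a apex),
      In (tagged a m f) arrows -> In (tagged a m g) arrows -> f = g }.

Definition diag_le (d d' : diag) : Prop :=
  exists t : hom (apex d) (apex d'), In (tagged (apex d) (apex_tag d) t) (arrows d') /\
    forall a m (f : hom a (apex d)), In (tagged a m f) (arrows d) ->
      In (tagged a m (cmp t f)) (arrows d').

Lemma diag_le_refl (d : diag) : diag_le d d.
Proof. exists (idm (apex d)). split; [apply apex_in|]. intros. rewrite cmp_idl. auto. Qed.

Lemma diag_le_trans (d1 d2 d3 : diag) : diag_le d1 d2 -> diag_le d2 d3 -> diag_le d1 d3.
Proof.
  intros [t1 [H1 H1']] [t2 [H2 H2']]. exists (cmp t2 t1). split.
  - apply H2'. auto.
  - intros. rewrite <- cmp_assoc. apply H2'. apply H1'. auto.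
Qed.

Definition fresh_tag {v : I} (L : list (tarrow v)) : nat :=
  list_max (map (fun e => S (fst (projT2 e))) L).

Lemma tag_lt_fresh {v : I} (L : list (tarrow v)) a m (f : hom a v) :
  In (tagged a m f) L -> m < fresh_tag L.
Proof.
  intro H. assert (Hmax := proj1 (list_max_le _ _) (le_n (fresh_tag L))).
  rewrite Forall_forall in Hmax. exact (Hmax _ (in_map _ _ _ H)).
Qed.

Section Glue.
Variables (d1 d2 : diag) (k : I) (w1 : hom (apex d1) k) (w2 : hom (apex d2) k).
Hypothesis w_agree : forall a m f1 f2,
  In (tagged a m f1) (arrows d1) -> In (tagged a m f2) (arrows d2) -> cmp w1 f1 = cmp w2 f2.

Let N := fresh_tag (arrows d1) + fresh_tag (arrows d2).

Definition glue_arrows : list (tarrow k) :=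
  tagged k N (idm k) :: map (tarrow_post w1) (arrows d1) ++ map (tarrow_post w2) (arrows d2).

Lemma glue_arrows_inv a m (f : hom a k) : In (tagged a m f) glue_arrows ->
  tagged a m f = tagged k N (idm k) \/
  m < N /\ ((exists f1, In (tagged a m f1) (arrows d1) /\ f = cmp w1 f1) \/
            (exists f2, In (tagged a m f2) (arrows d2) /\ f = cmp w2 f2)).
Proof.
  intros [H|H]; [left; auto|right].
  apply in_app_or in H. destruct H as [H|H]; apply in_map_post in H;
    destruct H as [f1 [H1 H2]]; apply tag_lt_fresh in H1 as Hm;
    (split; [unfold N; lia|]); eauto.
Qed.

Lemma glue_arrows_fun a m (f g : hom a k) :
  In (tagged a m f) glue_arrows -> In (tagged a m g) glue_arrows -> f = g.
Proof.
  intros Hf Hg. apply glue_arrows_inv in Hf. apply glue_arrows_inv in Hg.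
  destruct Hf as [Hf|[Hm Hf]]; destruct Hg as [Hg|[Hm' Hg]].
  - rewrite <- Hg in Hf. apply tagged_inj in Hf. tauto.
  - apply tagged_tag_eq in Hf. lia.
  - apply tagged_tag_eq in Hg. lia.
  - destruct Hf as [[f1 [Hf1 ->]]|[f1 [Hf1 ->]]]; destruct Hg as [[g1 [Hg1 ->]]|[g1 [Hg1 ->]]].
    + rewrite (arrows_fun d1 _ _ _ _ Hf1 Hg1). reflexivity.
    + eauto.
    + symmetry. eauto.
    + rewrite (arrows_fun d2 _ _ _ _ Hf1 Hg1). reflexivity.
Qed.

Definition diag_glue : diag :=
  {| apex := k; apex_tag := N; arrows := glue_arrows;
     apex_in := or_introl eq_refl; arrows_fun := glue_arrows_fun |}.

Lemma glue_in_l : In (tagged (apex d1) (apex_tag d1) w1) (arrows diag_glue).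
Proof.
  right. apply in_or_app. left. pose proof (in_map (tarrow_post w1) _ _ (apex_in d1)) as H.
  unfold tarrow_post in H; simpl in H. rewrite cmp_idr in H. exact H.
Qed.

Lemma glue_in_r : In (tagged (apex d2) (apex_tag d2) w2) (arrows diag_glue).
Proof.
  right. apply in_or_app. right. pose proof (in_map (tarrow_post w2) _ _ (apex_in d2)) as H.
  unfold tarrow_post in H; simpl in H. rewrite cmp_idr in H. exact H.
Qed.

Lemma glue_le_l : diag_le d1 diag_glue.
Proof.
  exists w1. split; [exact glue_in_l|]. intros a m f H.
  right. apply in_or_app. left. exact (in_map (tarrow_post w1) _ _ H).
Qed.

Lemma glue_le_r : diag_le d2 diag_glue.
Proof.
  exists w2. split; [exact glue_in_r|]. intros a m f H.
  right. apply in_or_app. right. exact (in_map (tarrow_post w2) _ _ H).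
Qed.

End Glue.

Lemma coequalize_against (a : I) (m : nat) (v2 : I) (L2 : list (tarrow v2)) :
  forall k (g : hom a k) (u2 : hom v2 k), exists k' (c : hom k k'),
    forall f2, In (tagged a m f2) L2 -> cmp c g = cmp c (cmp u2 f2).
Proof.
  induction L2 as [|e L2 IH]; intros k g u2.
  - exists k, (idm k). intros f2 [].
  - destruct (IH k g u2) as [k1 [c1 Hc1]].
    destruct (classic (exists f, e = tagged a m f)) as [[f ->]|Hn].
    + destruct (filt_coeq (cmp c1 g) (cmp c1 (cmp u2 f))) as [k2 [c2 Hc2]].
      exists k2, (cmp c2 c1). intros f2 [Hin|Hin]; rewrite <- !cmp_assoc.
      * apply tagged_inj in Hin. destruct Hin as [_ <-]. exact Hc2.
      * f_equal. auto.
    + exists k1, c1. intros f2 [Hin|Hin]; [exfalso; eauto | auto].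
Qed.

Lemma coequalize_lists (v1 v2 : I) (L1 : list (tarrow v1)) (L2 : list (tarrow v2)) :
  forall k (u1 : hom v1 k) (u2 : hom v2 k), exists k' (c : hom k k'),
    forall a m f1 f2, In (tagged a m f1) L1 -> In (tagged a m f2) L2 ->
      cmp c (cmp u1 f1) = cmp c (cmp u2 f2).
Proof.
  induction L1 as [|[a0 [m0 f0]] L1 IH]; intros k u1 u2.
  - exists k, (idm k). intros a m f1 f2 [].
  - destruct (IH k u1 u2) as [k1 [c1 Hc1]].
    destruct (coequalize_against a0 m0 v2 L2 _ (cmp c1 (cmp u1 f0)) (cmp c1 u2))
      as [k2 [c2 Hc2]].
    exists k2, (cmp c2 c1). intros a m f1 f2 [Hin|Hin] Hin2; rewrite <- !cmp_assoc.
    + assert (a0 = a) by exact (f_equal (@projT1 _ _) Hin). subst a0.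
      apply tagged_inj in Hin. destruct Hin; subst.
      rewrite (Hc2 f2 Hin2), <- !cmp_assoc. reflexivity.
    + f_equal. eauto.
Qed.

Lemma diag_join (d1 d2 : diag) k (u1 : hom (apex d1) k) (u2 : hom (apex d2) k) :
  exists (e : diag) (c : hom k (apex e)),
    In (tagged (apex d1) (apex_tag d1) (cmp c u1)) (arrows e) /\
    In (tagged (apex d2) (apex_tag d2) (cmp c u2)) (arrows e) /\
    diag_le d1 e /\ diag_le d2 e.
Proof.
  destruct (coequalize_lists _ _ (arrows d1) (arrows d2) _ u1 u2) as [k' [c Hc]].
  assert (Hw : forall a m f1 f2, In (tagged a m f1) (arrows d1) ->
     In (tagged a m f2) (arrows d2) -> cmp (cmp c u1) f1 = cmp (cmp c u2) f2).
  { intros. rewrite <- !cmp_assoc. eauto. }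
  exists (diag_glue d1 d2 k' (cmp c u1) (cmp c u2) Hw), c.
  split; [apply glue_in_l|]. split; [apply glue_in_r|].
  split; [apply glue_le_l | apply glue_le_r].
Qed.

Lemma diag_directed (d1 d2 : diag) : exists d, diag_le d1 d /\ diag_le d2 d.
Proof.
  destruct (filt_cocone (apex d1) (apex d2)) as [k [u [v _]]].
  destruct (diag_join d1 d2 k u v) as [e [_ [_ [_ [H1 H2]]]]]. eauto.
Qed.

Definition diag_of (i : I) : diag.
Proof.
  refine {| apex := i; apex_tag := 0; arrows := [tagged i 0 (idm i)] |}.
  - left; reflexivity.
  - intros a m f g [Hf|[]] [Hg|[]]. rewrite Hg in Hf. apply tagged_inj in Hf. destruct Hf; auto.
Defined.

Definition le_arrow {d d' : diag} (h : diag_le d d') : hom (apex d) (apex d') :=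
  proj1_sig (constructive_indefinite_description _ h).

Lemma le_arrow_in {d d'} (h : diag_le d d') :
  In (tagged (apex d) (apex_tag d) (le_arrow h)) (arrows d').
Proof. exact (proj1 (proj2_sig (constructive_indefinite_description _ h))). Qed.

Lemma le_arrow_post {d d'} (h : diag_le d d') a m f :
  In (tagged a m f) (arrows d) -> In (tagged a m (cmp (le_arrow h) f)) (arrows d').
Proof. exact (proj2 (proj2_sig (constructive_indefinite_description _ h)) a m f). Qed.

Lemma le_arrow_unique {d d'} (h : diag_le d d') t :
  In (tagged (apex d) (apex_tag d) t) (arrows d') -> le_arrow h = t.
Proof. intro H. exact (arrows_fun d' _ _ _ _ (le_arrow_in h) H). Qed.

Lemma le_arrow_refl {d} (h : diag_le d d) : le_arrow h = idm (apex d).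
Proof. apply le_arrow_unique. apply apex_in. Qed.

Lemma le_arrow_comp {d1 d2 d3} (h1 : diag_le d1 d2) (h2 : diag_le d2 d3) (h3 : diag_le d1 d3) :
  le_arrow h3 = cmp (le_arrow h2) (le_arrow h1).
Proof. apply le_arrow_unique. apply le_arrow_post. apply le_arrow_in. Qed.

Definition eventually (P : diag -> Prop) : Prop := exists e, forall d, diag_le e d -> P d.

Lemma eventually_ge (c : diag) : eventually (diag_le c).
Proof. exists c. auto. Qed.

Lemma eventually_and (P Q : diag -> Prop) :
  eventually P -> eventually Q -> eventually (fun d => P d /\ Q d).
Proof.
  intros [e1 H1] [e2 H2]. destruct (diag_directed e1 e2) as [e [Ha Hb]]. exists e.
  intros d Hd. split; [apply H1|apply H2]; eapply diag_le_trans; eauto.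
Qed.

Lemma eventually_forall_lt (P : nat -> diag -> Prop) N :
  (forall k, k < N -> eventually (P k)) -> eventually (fun d => forall k, k < N -> P k d).
Proof.
  induction N as [|N IH]; intro H.
  - destruct (filt_nonempty I) as [i]. exists (diag_of i). intros. lia.
  - destruct (eventually_and _ _ (IH (fun k Hk => H k (Nat.lt_lt_succ_r _ _ Hk)))
                (H N (Nat.lt_succ_diag_r N))) as [e He].
    exists e. intros d Hd k Hk. destruct (He d Hd) as [Ha Hb].
    destruct (Nat.eq_dec k N); [subst; auto | apply Ha; lia].
Qed.

Lemma eventually_above (P : diag -> Prop) (c : diag) :
  eventually P -> exists d, diag_le c d /\ P d.
Proof. intros [e He]. destruct (diag_directed c e) as [d [H1 H2]]. eauto. Qed.

End CofinalDirectedSet.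
Arguments diag I : clear implicits.

(** * Eventual equality of maps out of the stages of [G] *)

Section EventualEquality.
Context {G : ProGrp}.
Notation I := (pidx G).

Definition diag_map {d d' : diag I} (h : diag_le d d') : GHom (G (apex d')) (G (apex d)) :=
  pmap (le_arrow h).

Lemma diag_map_refl {d : diag I} (h : diag_le d d) x : diag_map h x = x.
Proof. unfold diag_map. rewrite le_arrow_refl. apply pmap_id. Qed.

Lemma diag_map_comp {d1 d2 d3 : diag I}
  (h1 : diag_le d1 d2) (h2 : diag_le d2 d3) (h3 : diag_le d1 d3) x :
  diag_map h3 x = diag_map h1 (diag_map h2 x).
Proof. unfold diag_map. rewrite (le_arrow_comp h1 h2 h3). apply pmap_comp. Qed.

Lemma diag_map_irr {d d' : diag I} (h h' : diag_le d d') x : diag_map h x = diag_map h' x.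
Proof. rewrite (proof_irrelevance _ h h'). reflexivity. Qed.

Definition eventually_eq (c1 c2 : diag I) {T : Type}
  (f : G (apex c1) -> T) (g : G (apex c2) -> T) : Prop :=
  eventually (fun d => forall (h1 : diag_le c1 d) (h2 : diag_le c2 d) x,
                 f (diag_map h1 x) = g (diag_map h2 x)).

Lemma eventually_eq_intro (c1 c2 : diag I) {T} (f : G (apex c1) -> T) g :
  (exists k (u1 : hom (apex c1) k) (u2 : hom (apex c2) k),
      forall x, f (pmap u1 x) = g (pmap u2 x)) ->
  eventually_eq c1 c2 f g.
Proof.
  intros [k [u1 [u2 Hu]]].
  destruct (diag_join c1 c2 k u1 u2) as [e [c [Ht1 [Ht2 [H1 H2]]]]].
  exists e. intros d Hd h1 h2 x.
  rewrite (diag_map_comp H1 Hd h1), (diag_map_comp H2 Hd h2). unfold diag_map at 1 3.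
  rewrite (le_arrow_unique H1 _ Ht1), (le_arrow_unique H2 _ Ht2), !pmap_comp. apply Hu.
Qed.

Lemma eventually_eq_elim (c1 c2 : diag I) {T} (f : G (apex c1) -> T) g :
  eventually_eq c1 c2 f g ->
  exists k (u1 : hom (apex c1) k) (u2 : hom (apex c2) k),
    forall x, f (pmap u1 x) = g (pmap u2 x).
Proof.
  intro H.
  destruct (eventually_above _ c1 (eventually_and _ _ H (eventually_ge c2)))
    as [d [h1 [Hd h2]]].
  exists (apex d), (le_arrow h1), (le_arrow h2). apply Hd.
Qed.

Lemma eventually_eq_refl (c : diag I) {T} (f : G (apex c) -> T) : eventually_eq c c f f.
Proof. exists c. intros d _ h1 h2 x. rewrite (diag_map_irr h1 h2). reflexivity. Qed.

Lemma eventually_eq_sym (c1 c2 : diag I) {T} (f : G (apex c1) -> T) g :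
  eventually_eq c1 c2 f g -> eventually_eq c2 c1 g f.
Proof. intros [e He]. exists e. intros. symmetry. auto. Qed.

Lemma eventually_eq_trans (c1 c2 c3 : diag I) {T} (f : G (apex c1) -> T) g k :
  eventually_eq c1 c2 f g -> eventually_eq c2 c3 g k -> eventually_eq c1 c3 f k.
Proof.
  intros H1 H2.
  destruct (eventually_and _ _ (eventually_and _ _ H1 H2) (eventually_ge c2)) as [e He].
  exists e. intros d Hd h1 h3 x. destruct (He d Hd) as [[Ha Hb] h2].
  rewrite (Ha h1 h2). apply Hb.
Qed.

Lemma eventually_eq_comp (c1 c2 : diag I) {T U} (F : T -> U) (f : G (apex c1) -> T) g :
  eventually_eq c1 c2 f g -> eventually_eq c1 c2 (fun x => F (f x)) (fun x => F (g x)).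
Proof. intros [e He]. exists e. intros. f_equal. auto. Qed.

Lemma eventually_eq_ext (c1 c2 : diag I) {T} (f f' : G (apex c1) -> T) g g' :
  (forall x, f x = f' x) -> (forall x, g x = g' x) ->
  eventually_eq c1 c2 f g -> eventually_eq c1 c2 f' g'.
Proof. intros Hf Hg [e He]. exists e. intros. rewrite <- Hf, <- Hg. auto. Qed.

Lemma eventually_eq_restrict {c c' c2 : diag I} (h : diag_le c c') {T}
  {f : G (apex c) -> T} {g : G (apex c2) -> T} :
  eventually_eq c c2 f g -> eventually_eq c' c2 (fun x => f (diag_map h x)) g.
Proof.
  intros [e He]. destruct (diag_directed e c') as [e' [H1 H2]]. exists e'.
  intros d Hd h1 h2 x. assert (Hc : diag_le c d) by (eapply diag_le_trans; eauto).
  rewrite <- (diag_map_comp h h1 Hc). apply He. eapply diag_le_trans; eauto.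
Qed.

End EventualEquality.

(** * The orbit system of a periodic automorphism *)

Section PeriodicAutomorphism.
Variables (G : ProGrp) (phi : PreHom G G) (n : nat).
Hypothesis n_pos : 1 <= n.
Hypothesis phi_prohom : is_prohom phi.
Hypothesis phi_order : pro_eq (pro_iter n phi) (pro_id G).
Notation I := (pidx G).

Lemma n_neq0 : n <> 0.
Proof. lia. Qed.

Definition src_iter (m : nat) (i : I) : I := src (pro_iter m phi) i.
Definition phi_iter (m : nat) (i : I) : GHom (G (src_iter m i)) (G i) :=
  comp_at (pro_iter m phi) i.

Lemma phi_natural i i' (w : hom i i') :
  eventually_eq (diag_of (src phi i')) (diag_of (src phi i))
    (fun x => pmap w (phi i' x)) (fun x => phi i x).
Proof. apply eventually_eq_intro. exact (phi_prohom i i' w). Qed.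

Lemma eventually_eq_iter_precomp k
  (natural_k : forall i i' (w : hom i i'),
     eventually_eq (diag_of (src_iter k i')) (diag_of (src_iter k i))
       (fun x => pmap w (phi_iter k i' x)) (fun x => phi_iter k i x))
  (c1 c2 : diag I) {T} (f : G (apex c1) -> T) g :
  eventually_eq c1 c2 f g ->
  eventually_eq (diag_of (src_iter k (apex c1))) (diag_of (src_iter k (apex c2)))
    (fun x => f (phi_iter k (apex c1) x)) (fun x => g (phi_iter k (apex c2) x)).
Proof.
  intro H. destruct (eventually_eq_elim _ _ _ _ H) as [d [u1 [u2 Hu]]].
  eapply eventually_eq_trans.
  - apply eventually_eq_sym. apply (eventually_eq_comp _ _ f). apply (natural_k _ _ u1).
  - eapply eventually_eq_trans; [| apply (eventually_eq_comp _ _ g), (natural_k _ _ u2)].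
    eapply eventually_eq_ext; [intro x; reflexivity | | apply eventually_eq_refl].
    intro x. apply Hu.
Qed.

Lemma phi_iter_natural k : forall i i' (w : hom i i'),
  eventually_eq (diag_of (src_iter k i')) (diag_of (src_iter k i))
    (fun x => pmap w (phi_iter k i' x)) (fun x => phi_iter k i x).
Proof.
  induction k as [|k IH]; intros i i' w.
  - apply eventually_eq_intro. exists i', (idm i'), w. intro x. simpl. rewrite pmap_id. reflexivity.
  - exact (eventually_eq_iter_precomp k IH (diag_of (src phi i')) (diag_of (src phi i)) _ _
             (phi_natural i i' w)).
Qed.

Lemma phi_iter_add j : forall m i i' (w : hom (src_iter j i) i'),
  eventually_eq (diag_of (src_iter m i')) (diag_of (src_iter (j + m) i))
    (fun x => phi_iter j i (pmap w (phi_iter m i' x))) (phi_iter (j + m) i).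
Proof.
  induction j as [|j IH]; intros m i i' w.
  - exact (phi_iter_natural m i i' w).
  - exact (eventually_eq_comp _ _ (phi i) _ _ (IH m (src phi i) i' w)).
Qed.

Lemma phi_iter_add_n k i :
  eventually_eq (diag_of (src_iter (n + k) i)) (diag_of (src_iter k i))
    (phi_iter (n + k) i) (phi_iter k i).
Proof.
  destruct (phi_order i) as [d [u1 [u2 Hu]]].
  eapply eventually_eq_trans.
  - apply eventually_eq_sym. apply (phi_iter_add n k i d u1).
  - eapply eventually_eq_trans; [| apply (phi_iter_natural k i d u2)].
    eapply eventually_eq_ext; [intro x; reflexivity | | apply eventually_eq_refl].
    intro x. apply (Hu (phi_iter k d x)).
Qed.

Lemma phi_iter_mod t : forall i,
  eventually_eq (diag_of (src_iter t i)) (diag_of (src_iter (t mod n) i))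
    (phi_iter t i) (phi_iter (t mod n) i).
Proof.
  induction t as [t IH] using (well_founded_induction Nat.lt_wf_0). intro i.
  destruct (Nat.lt_ge_cases t n) as [Hlt|Hge].
  - rewrite (Nat.mod_small t n Hlt). apply eventually_eq_refl.
  - pose proof (Nat.Div0.mod_add (t - n) 1 n) as E.
    rewrite Nat.mul_1_l, Nat.add_comm in E.
    replace t with (n + (t - n)) by lia. rewrite E.
    eapply eventually_eq_trans; [apply phi_iter_add_n|]. apply IH. lia.
Qed.

(* An index [p] pairs a target stage [oi_tgt p] with a stage [oi_src p] lying above the
   sources of all [phi^k], [k < n], at the target, so that the whole orbit
   [x |-> (phi^(j mod n) x)_j] is defined on [G (apex (oi_src p))]. *)
Record orbit_index := {
  oi_tgt : diag I;
  oi_src : diag I;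
  oi_src_ge : forall k, diag_le (diag_of (src_iter (k mod n) (apex oi_tgt))) oi_src }.

Definition orbit (p : orbit_index) (x : G (apex (oi_src p))) (j : nat) : G (apex (oi_tgt p)) :=
  phi_iter (j mod n) (apex (oi_tgt p)) (diag_map (oi_src_ge p j) x).

Lemma orbit_mod p x t t' : t mod n = t' mod n -> orbit p x t = orbit p x t'.
Proof.
  intro E. unfold orbit. generalize (oi_src_ge p t) (oi_src_ge p t'). rewrite E.
  intros q q'. rewrite (proof_irrelevance _ q q'). reflexivity.
Qed.

Lemma orbit_mod_self p x t : orbit p x t = orbit p x (t mod n).
Proof. apply orbit_mod. rewrite Nat.Div0.mod_mod. reflexivity. Qed.

Definition orbit_hom (p : orbit_index) :
  GHom (G (apex (oi_src p))) (seq_grp (G (apex (oi_tgt p)))).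
Proof.
  refine {| hfun := fun x => (orbit p x : seq_grp _) |}.
  intros. apply functional_extensionality. intro j. unfold orbit. simpl. rewrite !hmul. reflexivity.
Defined.

Definition orbit_gen (p : orbit_index) (y : seq_grp (G (apex (oi_tgt p)))) : Prop :=
  exists m x, forall j, y j = orbit p x (j + m).

Definition orbit_grp (p : orbit_index) : Grp :=
  subgrp_gen (seq_grp (G (apex (oi_tgt p)))) (orbit_gen p).

Definition oi_le (p q : orbit_index) : Prop :=
  diag_le (oi_tgt p) (oi_tgt q) /\ diag_le (oi_src p) (oi_src q) /\
  forall (h1 : diag_le (oi_tgt p) (oi_tgt q)) (h2 : diag_le (oi_src p) (oi_src q)) x j,
    diag_map h1 (orbit q x j) = orbit p (diag_map h2 x) j.

Lemma oi_le_refl p : oi_le p p.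
Proof.
  split; [apply diag_le_refl|]. split; [apply diag_le_refl|].
  intros. rewrite !diag_map_refl. reflexivity.
Qed.

Lemma oi_le_trans p q r : oi_le p q -> oi_le q r -> oi_le p r.
Proof.
  intros [a1 [b1 E1]] [a2 [b2 E2]].
  split; [eapply diag_le_trans; eauto|]. split; [eapply diag_le_trans; eauto|].
  intros h1 h2 x j.
  rewrite (diag_map_comp a1 a2 h1), (E2 a2 b2), (E1 a1 b1), (diag_map_comp b1 b2 h2).
  reflexivity.
Qed.

Lemma oi_src_exists (a : diag I) (P : diag I -> Prop) : eventually P ->
  exists b, (forall k, diag_le (diag_of (src_iter (k mod n) (apex a))) b) /\ P b.
Proof.
  intro HP.
  assert (H0 : eventually (fun d => forall k, k < n -> diag_le (diag_of (src_iter k (apex a))) d)).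
  { apply eventually_forall_lt. intros. apply eventually_ge. }
  destruct (eventually_above _ a (eventually_and _ _ H0 HP)) as [b [_ [Hb HPb]]].
  exists b. split; auto. intro k. apply Hb, Nat.mod_upper_bound, n_neq0.
Qed.

Lemma orbit_restrict_eventually (p : orbit_index) a' (h : diag_le (oi_tgt p) a') :
  eventually (fun d => forall k, k < n ->
    forall (q : diag_le (diag_of (src_iter (k mod n) (apex a'))) d)
           (h' : diag_le (oi_src p) d) x,
      diag_map h (phi_iter (k mod n) (apex a') (diag_map q x)) =
      phi_iter (k mod n) (apex (oi_tgt p)) (diag_map (oi_src_ge p k) (diag_map h' x))).
Proof.
  apply eventually_forall_lt. intros k _.
  assert (E : eventually_eq (diag_of (src_iter (k mod n) (apex a'))) (oi_src p)
     (fun x => diag_map h (phi_iter (k mod n) (apex a') x))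
     (fun x => phi_iter (k mod n) (apex (oi_tgt p)) (diag_map (oi_src_ge p k) x))).
  { eapply eventually_eq_trans.
    - apply (phi_iter_natural (k mod n) (apex (oi_tgt p)) (apex a') (le_arrow h)).
    - apply eventually_eq_sym, eventually_eq_restrict, eventually_eq_refl. }
  exact E.
Qed.

Lemma oi_upper_bound (p1 p2 : orbit_index) a'
  (h1 : diag_le (oi_tgt p1) a') (h2 : diag_le (oi_tgt p2) a') (P : diag I -> Prop) :
  eventually P ->
  exists b' (ge' : forall k, diag_le (diag_of (src_iter (k mod n) (apex a'))) b'),
    oi_le p1 (Build_orbit_index a' b' ge') /\ oi_le p2 (Build_orbit_index a' b' ge') /\ P b'.
Proof.
  intro HP.
  pose proof (eventually_and _ _
    (eventually_and _ _ (orbit_restrict_eventually p1 a' h1) (orbit_restrict_eventually p2 a' h2))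
    (eventually_and _ _ (eventually_and _ _ (eventually_ge (oi_src p1)) (eventually_ge (oi_src p2)))
                    HP)) as Hall.
  destruct (oi_src_exists a' _ Hall) as [b' [ge' [[C1 C2] [[L1 L2] HPb]]]].
  exists b', ge'.
  assert (Hle : forall (p : orbit_index) (h : diag_le (oi_tgt p) a'),
     (forall k, k < n -> forall (q : diag_le (diag_of (src_iter (k mod n) (apex a'))) b')
          (h' : diag_le (oi_src p) b') x,
        diag_map h (phi_iter (k mod n) (apex a') (diag_map q x)) =
        phi_iter (k mod n) (apex (oi_tgt p)) (diag_map (oi_src_ge p k) (diag_map h' x))) ->
     diag_le (oi_src p) b' -> oi_le p (Build_orbit_index a' b' ge')).
  { intros p h C L. split; [exact h|]. split; [exact L|]. intros hh1 hh2 x j.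
    rewrite orbit_mod_self, (orbit_mod_self p).
    unfold orbit at 1. simpl. rewrite (diag_map_irr hh1 h). apply C.
    apply Nat.mod_upper_bound, n_neq0. }
  split; [apply (Hle p1 h1) | split; [apply (Hle p2 h2) | exact HPb]]; auto.
Qed.

Definition orbit_trans {p q : orbit_index} (h : oi_le p q) : GHom (orbit_grp q) (orbit_grp p).
Proof.
  refine (subgrp_map _ _ (seq_map _ _ (diag_map (proj1 h))) (orbit_gen q) (orbit_gen p) _).
  intros y [m [x Hy]]. apply gen_base. exists m, (diag_map (proj1 (proj2 h)) x). intro j.
  simpl. rewrite Hy. apply (proj2 (proj2 h)).
Defined.

Definition oi_dirset : DirectedSet.
Proof.
  refine {| dcar := orbit_index; dle := oi_le; dle_refl := oi_le_refl; dle_trans := oi_le_trans |}.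
  - destruct (filt_nonempty I) as [i].
    destruct (oi_src_exists (diag_of i) _ (eventually_ge (diag_of i))) as [b [ge _]].
    exact (inhabits (Build_orbit_index (diag_of i) b ge)).
  - intros p1 p2. destruct (diag_directed (oi_tgt p1) (oi_tgt p2)) as [a' [h1 h2]].
    destruct (oi_upper_bound p1 p2 a' h1 h2 _ (eventually_ge a')) as [b' [ge' [H1 [H2 _]]]].
    exists (Build_orbit_index a' b' ge'). auto.
Defined.

Definition orbit_sys : InvSys oi_dirset.
Proof.
  refine (@Build_InvSys oi_dirset orbit_grp (@orbit_trans) _ _); intros;
    apply subgrp_val_inj, functional_extensionality; intro j; simpl.
  - apply diag_map_refl.
  - apply diag_map_comp.
Defined.

Definition orbit_shift (p : orbit_index) (k : nat) : GHom (orbit_grp p) (orbit_grp p).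
Proof.
  refine (subgrp_map _ _ (seq_shift _ k) (orbit_gen p) (orbit_gen p) _).
  intros y [m [x Hy]]. apply gen_base. exists (k + m), x. intro j. simpl.
  rewrite Hy, Nat.add_assoc. reflexivity.
Defined.

Lemma orbit_grp_periodic (p : orbit_index) (y : orbit_grp p) j :
  proj1_sig y (j + n) = proj1_sig y j.
Proof.
  destruct y as [y Hy]. simpl.
  refine (ghom_eq_on_gen _ _ (orbit_gen p) (seq_eval _ (j + n)) (seq_eval _ j) _ y Hy).
  intros y' [m [x Hx]]. simpl. rewrite (Hx (j + n)), (Hx j). apply orbit_mod.
  replace (j + n + m) with ((j + m) + 1 * n) by lia. apply Nat.Div0.mod_add.
Qed.

Lemma orbit_shift_n (p : orbit_index) (y : orbit_grp p) : orbit_shift p n y = y.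
Proof.
  apply subgrp_val_inj, functional_extensionality. intro j. apply orbit_grp_periodic.
Qed.

Lemma orbit_shift_add (p : orbit_index) k l (y : orbit_grp p) :
  orbit_shift p k (orbit_shift p l y) = orbit_shift p (k + l) y.
Proof.
  apply subgrp_val_inj, functional_extensionality. intro j. simpl. f_equal. lia.
Qed.

Lemma fiter_orbit_shift (p : orbit_index) k (y : orbit_grp p) :
  fiter k (orbit_shift p 1) y = orbit_shift p k y.
Proof.
  induction k as [|k IH]; cbn [fiter].
  - apply subgrp_val_inj, functional_extensionality. intro j. simpl. f_equal. lia.
  - rewrite IH, orbit_shift_add. reflexivity.
Qed.

Lemma orbit_shift_natural (p q : orbit_index) (h : oi_le p q) k (y : orbit_grp q) :
  orbit_shift p k (orbit_trans h y) = orbit_trans h (orbit_shift q k y).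
Proof. apply subgrp_val_inj. reflexivity. Qed.

Lemma orbit_gen_orbit p x : orbit_gen p (orbit p x).
Proof. exists 0, x. intro j. rewrite Nat.add_0_r. reflexivity. Qed.

Definition orbit_embed_at (p : orbit_index) : GHom (G (apex (oi_src p))) (orbit_grp p).
Proof.
  refine {| hfun := fun x => (exist _ (orbit p x : seq_grp _) (gen_base _ _ (orbit_gen_orbit p x))
                                : orbit_grp p) |}.
  intros x y. apply subgrp_val_inj. exact (hmul (orbit_hom p) x y).
Defined.

Definition orbit_embed : PreHom G (pro_of_sys orbit_sys) :=
  @Build_PreHom G (pro_of_sys orbit_sys) (fun p : orbit_index => apex (oi_src p)) orbit_embed_at.

Definition oi_at_spec (i : I) :=
  constructive_indefinite_description _
    (oi_src_exists (diag_of i) _ (eventually_ge (diag_of i))).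

Definition oi_at (i : I) : orbit_index :=
  Build_orbit_index (diag_of i) (proj1_sig (oi_at_spec i)) (proj1 (proj2_sig (oi_at_spec i))).

Definition orbit_proj_at (i : I) : GHom (orbit_grp (oi_at i)) (G i) :=
  {| hfun := fun y : orbit_grp (oi_at i) => proj1_sig y 0; hmul := fun _ _ => eq_refl |}.

Definition orbit_proj : PreHom (pro_of_sys orbit_sys) G :=
  @Build_PreHom (pro_of_sys orbit_sys) G oi_at orbit_proj_at.

Lemma diag_map_arrow (d d' : diag I) t (h : diag_le d d') x :
  In (tagged (apex d) (apex_tag d) t) (arrows d') -> diag_map h x = pmap t x.
Proof. intro Ht. unfold diag_map. rewrite (le_arrow_unique h t Ht). reflexivity. Qed.

Lemma orbit_embed_prohom : is_prohom orbit_embed.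
Proof.
  intros p q h. exists (apex (oi_src q)), (idm _), (le_arrow (proj1 (proj2 h))). intro x.
  apply subgrp_val_inj, functional_extensionality. intro j. simpl. rewrite pmap_id.
  apply (proj2 (proj2 h)).
Qed.

Lemma orbit_proj_prohom : is_prohom orbit_proj.
Proof.
  intros i i' w.
  destruct (diag_join (diag_of i') (diag_of i) i' (idm i') w) as [e [c [Ht1 [Ht2 [H1 H2]]]]].
  destruct (oi_upper_bound (oi_at i') (oi_at i) e H1 H2 _ (eventually_ge e))
    as [b' [ge' [U1 [U2 _]]]].
  exists (Build_orbit_index e b' ge'), U1, U2. intro y. simpl.
  rewrite (diag_map_arrow _ _ _ _ _ Ht1), (diag_map_arrow _ _ _ _ _ Ht2), !pmap_comp, pmap_id.
  reflexivity.
Qed.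

Lemma orbit_proj_embed : pro_eq (pro_comp orbit_proj orbit_embed) (pro_id G).
Proof.
  intro i.
  assert (H : eventually_eq (oi_src (oi_at i)) (diag_of i)
                (fun x => orbit (oi_at i) x 0) (fun x => x)).
  { eapply eventually_eq_trans.
    - apply (eventually_eq_restrict (oi_src_ge (oi_at i) 0)), eventually_eq_refl.
    - exact (eventually_eq_sym _ _ _ _ (phi_iter_mod 0 i)). }
  exact (eventually_eq_elim _ _ _ _ H).
Qed.

Lemma orbit_phi_iter_eventually (p : orbit_index) a' (ha : diag_le (oi_tgt p) a')
  (hs : diag_le (diag_of (apex (oi_src p))) a') j m :
  eventually_eq (diag_of (src_iter (m mod n) (apex a')))
    (diag_of (src_iter ((j + m) mod n) (apex a')))
    (fun x => orbit p (diag_map hs (phi_iter (m mod n) (apex a') x)) j)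
    (fun x => diag_map ha (phi_iter ((j + m) mod n) (apex a') x)).
Proof.
  assert (Hadd := phi_iter_add (j mod n) (m mod n) (apex (oi_tgt p)) (apex a')
                    (cmp (le_arrow hs) (le_arrow (oi_src_ge p j)))).
  assert (Hmod := phi_iter_mod (j mod n + m mod n) (apex (oi_tgt p))).
  rewrite <- Nat.Div0.add_mod in Hmod.
  assert (Hnat := phi_iter_natural ((j + m) mod n) (apex (oi_tgt p)) (apex a') (le_arrow ha)).
  eapply eventually_eq_trans;
    [| eapply eventually_eq_trans; [exact Hmod | exact (eventually_eq_sym _ _ _ _ Hnat)]].
  eapply eventually_eq_ext; [| intro x; reflexivity | exact Hadd].
  intro x. unfold orbit, diag_map. rewrite pmap_comp. reflexivity.
Qed.

Lemma orbit_embed_proj :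
  pro_eq (pro_comp orbit_embed orbit_proj) (pro_id (pro_of_sys orbit_sys)).
Proof.
  intro p. set (ps := oi_at (apex (oi_src p))).
  destruct (diag_directed (oi_tgt p) (oi_tgt ps)) as [a' [ha hs]].
  set (P := fun b' => forall j, j < n -> forall m, m < n ->
     forall (q1 : diag_le (diag_of (src_iter (m mod n) (apex a'))) b')
            (q2 : diag_le (diag_of (src_iter ((j + m) mod n) (apex a'))) b') x,
       orbit p (diag_map hs (phi_iter (m mod n) (apex a') (diag_map q1 x))) j =
       diag_map ha (phi_iter ((j + m) mod n) (apex a') (diag_map q2 x))).
  assert (evP : eventually P).
  { apply eventually_forall_lt. intros j _. apply eventually_forall_lt. intros m _.
    exact (orbit_phi_iter_eventually p a' ha hs j m). }
  destruct (oi_upper_bound ps p a' hs ha P evP) as [b' [ge' [U1 [U2 HP]]]].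
  set (q := Build_orbit_index a' b' ge').
  exists q, U1, U2. intros [y Hy]. apply subgrp_val_inj, functional_extensionality. intro j.
  (* both sides are homomorphisms in [y], so it suffices to compare them on generators *)
  refine (ghom_eq_on_gen _ _ (orbit_gen q)
     (ghom_comp (seq_eval _ j)
        (ghom_comp (orbit_hom p) (ghom_comp (diag_map (proj1 U1)) (seq_eval _ 0))))
     (ghom_comp (diag_map (proj1 U2)) (seq_eval _ j)) _ y Hy).
  intros y' [m [x Hx]]. simpl. rewrite (Hx 0), (Hx j). simpl.
  rewrite (orbit_mod_self p _ j), (orbit_mod_self q x m).
  rewrite (orbit_mod q x (j + m) (j mod n + m mod n)) by apply Nat.Div0.add_mod.
  rewrite (diag_map_irr (proj1 U1) hs), (diag_map_irr (proj1 U2) ha).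
  exact (HP (j mod n) (Nat.mod_upper_bound _ _ n_neq0) (m mod n) (Nat.mod_upper_bound _ _ n_neq0)
           (ge' (m mod n)) (ge' (j mod n + m mod n)) x).
Qed.

Lemma orbit_phi_eventually (p : orbit_index) j :
  eventually_eq (diag_of (src phi (apex (oi_src p)))) (oi_src p)
    (fun x => orbit p (phi (apex (oi_src p)) x) j) (fun x => orbit p x (S j)).
Proof.
  assert (Hadd := phi_iter_add (j mod n) 1 (apex (oi_tgt p)) (apex (oi_src p))
                    (le_arrow (oi_src_ge p j))).
  assert (Hmod := phi_iter_mod (j mod n + 1) (apex (oi_tgt p))).
  rewrite Nat.Div0.add_mod_idemp_l in Hmod. replace (j + 1) with (S j) in Hmod by lia.
  assert (Hrestr := eventually_eq_restrict (oi_src_ge p (S j))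
                      (eventually_eq_refl (diag_of (src_iter (S j mod n) (apex (oi_tgt p))))
                         (fun x => phi_iter (S j mod n) (apex (oi_tgt p)) x))).
  eapply eventually_eq_trans;
    [exact Hadd |
     eapply eventually_eq_trans; [exact Hmod | exact (eventually_eq_sym _ _ _ _ Hrestr)]].
Qed.

Lemma orbit_embed_phi :
  pro_eq (pro_comp orbit_embed phi)
         (pro_comp (@level_hom oi_dirset orbit_sys (fun p => orbit_shift p 1)) orbit_embed).
Proof.
  intro p.
  destruct (eventually_above _ (oi_src p)
    (eventually_and _ _ (eventually_forall_lt _ n (fun j _ => orbit_phi_eventually p j))
       (eventually_and _ _ (eventually_ge (diag_of (src phi (apex (oi_src p)))))
                           (eventually_ge (oi_src p)))))
    as [d [_ [Hd [h1 h2]]]].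
  exists (apex d), (le_arrow h1), (le_arrow h2). intro x.
  apply subgrp_val_inj, functional_extensionality. intro j. simpl.
  rewrite (orbit_mod_self p _ j), (orbit_mod p _ (j + 1) (S (j mod n)))
    by (rewrite <- Nat.Div0.add_mod_idemp_l; f_equal; lia).
  exact (Hd (j mod n) (Nat.mod_upper_bound _ _ n_neq0) h1 h2 x).
Qed.

Lemma orbit_embed_iso : pro_iso orbit_embed.
Proof.
  split; [exact orbit_embed_prohom|].
  exists orbit_proj. split; [exact orbit_proj_prohom|].
  split; [exact orbit_proj_embed | exact orbit_embed_proj].
Qed.

Lemma orbit_shift_1_inverse (p : orbit_index) :
  exists g : GHom (orbit_grp p) (orbit_grp p),
    (forall y, g (orbit_shift p 1 y) = y) /\ (forall y, orbit_shift p 1 (g y) = y).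
Proof.
  exists (orbit_shift p (n - 1)).
  split; intro y; rewrite orbit_shift_add;
    [replace (n - 1 + 1) with n | replace (1 + (n - 1)) with n];
    solve [lia | apply orbit_shift_n].
Qed.

Lemma fiter_orbit_shift_n (p : orbit_index) (y : orbit_grp p) : fiter n (orbit_shift p 1) y = y.
Proof. rewrite fiter_orbit_shift. apply orbit_shift_n. Qed.

End PeriodicAutomorphism.

Theorem mainTheorem7 (G : ProGrp) (phi : PreHom G G) (n : nat) :
  (1 <= n)%nat ->
  pro_iso phi ->
  pro_eq (pro_iter n phi) (pro_id G) ->
  exists (J : DirectedSet) (S : InvSys J) (phis : forall j : J, GHom (S j) (S j)),
    (forall j : J, (exists g : GHom (S j) (S j),
                      (forall x, g (phis j x) = x) /\ (forall x, phis j (g x) = x))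
                   /\ (forall x, fiter n (phis j) x = x)) /\
    (forall (i k : J) (h : @dle J i k) x, phis i (itrans h x) = itrans h (phis k x)) /\
    exists alpha : PreHom G (pro_of_sys S),
      pro_iso alpha /\
      pro_eq (pro_comp alpha phi) (pro_comp (level_hom phis) alpha).
Proof.
  intros n_pos [phi_prohom _] phi_order.
  exists (oi_dirset G phi n n_pos phi_prohom), (orbit_sys G phi n n_pos phi_prohom),
    (fun p => orbit_shift G phi n p 1).
  split; [|split].
  - intro p. split; [apply orbit_shift_1_inverse | apply fiter_orbit_shift_n]; assumption.
  - intros p q h y. apply orbit_shift_natural.
  - exists (orbit_embed G phi n n_pos phi_prohom).
    split; [apply orbit_embed_iso | apply orbit_embed_phi]; assumption.
Qed.
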